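(* Let $E$ be a finite set, $\mathcal{F}\subseteq 2^E$ a downward-closed family, $b_1,\dots,b_\ell\in\mathbb{R}_{\ge0}^{|E|}$, and $f(\boldsymbol{w})=\max_{S\in\mathcal{F}}\max_{i\in[\ell]}\langle b_i,\boldsymbol{w}_S\rangle$ for $\boldsymbol{w}\in\mathbb{R}_{\ge0}^{|E|}$. Let $L=\max_{S\in\mathcal{F},\,i\in[\ell],\,j\in E}a^S_{ij}$, where $a^S_{ij}=b_{ij}\cdot\mathbf{1}_{j\in S}$, and assume $L>0$. Then: (1) $f$ is $L$-Lipschitz: $|f(\boldsymbol{u})-f(\boldsymbol{v})|\le L\|\boldsymbol{u}-\boldsymbol{v}\|_1$; (2) $f$ is monotone: if $\boldsymbol{u}\ge\boldsymbol{v}$ coordinate-wise then $f(\boldsymbol{u})\ge f(\boldsymbol{v})$; (3) for every $\tau>0$, the function $f/(\tau L)$ restricted to the domain $[0,\tau]^{|E|}$ is self-bounding.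
   Context: For $S\subseteq E$ and $\boldsymbol{w}\in\mathbb{R}_{\ge0}^{|E|}$, $\boldsymbol{w}_S$ denotes the vector equal to $w_e$ on coordinates $e\in S$ and $0$ elsewhere; $b_{ij}$ is the $j$-th coordinate of $b_i$. A family $\mathcal{F}$ is downward-closed if $S\in\mathcal{F}$ and $T\subseteq S$ imply $T\in\mathcal{F}$. A function $g:\mathcal{X}\to\mathbb{R}$ on a product space $\mathcal{X}=\mathcal{X}_1\times\dots\times\mathcal{X}_n$ is self-bounding if there exist functions $g_i:\mathcal{X}^{(i)}\to\mathbb{R}$, $i\in[n]$, where $\mathcal{X}^{(i)}$ is the product of all factors except the $i$-th and $\boldsymbol{x}^{(i)}$ is $\boldsymbol{x}$ with the $i$-th coordinate removed, such that for all $\boldsymbol{x}$: $0\le g(\boldsymbol{x})-g_i(\boldsymbol{x}^{(i)})\le1$ for every $i$, and $\sum_{i}\big(g(\boldsymbol{x})-g_i(\boldsymbol{x}^{(i)})\big)\le g(\boldsymbol{x})$. *)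

From mathcomp Require Import all_boot all_order all_algebra.
Set Implicit Arguments. Unset Strict Implicit. Unset Printing Implicit Defensive.
Import Order.TTheory GRing.Theory Num.Theory.
Local Open Scope ring_scope.

Definition downward_closed (E : finType) (F : {set {set E}}) : Prop :=
  forall S T : {set E}, S \in F -> T \subset S -> T \in F.

Definition inner_restr (R : realFieldType) (E : finType)
  (bi : E -> R) (S : {set E}) (w : E -> R) : R :=
  \sum_(j in S) bi j * w j.

(* f(w) = max_{S in F} max_{i in [l]} <b_i, w_S>.
   All the maximised values are >= 0 for w >= 0 (b >= 0), so 0 is a harmless
   default for the iterated max (and F, 'I_l are nonempty when L > 0). *)
Definition fmax (R : realFieldType) (E : finType) (l : nat)
  (F : {set {set E}}) (b : 'I_l -> E -> R) (w : E -> R) : R :=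
  \big[Num.max/0]_(S in F) \big[Num.max/0]_(i < l) inner_restr (b i) S w.

Definition Lconst (R : realFieldType) (E : finType) (l : nat)
  (F : {set {set E}}) (b : 'I_l -> E -> R) : R :=
  \big[Num.max/0]_(S in F) \big[Num.max/0]_(i < l) \big[Num.max/0]_(j : E)
    (b i j * (j \in S)%:R).

(* Self-bounding function on the product space prod_{i in E} D i.
   A function g_i on X^(i) is represented as a function on E -> R which does
   not depend on coordinate i. *)
Definition self_bounding (R : realFieldType) (E : finType)
  (D : E -> R -> bool) (g : (E -> R) -> R) : Prop :=
  exists gi : E -> (E -> R) -> R,
    (forall i (x y : E -> R), (forall j, j != i -> x j = y j) -> gi i x = gi i y) /\
    (forall x : E -> R, (forall j, D j (x j)) ->
       (forall i, 0 <= g x - gi i x <= 1) /\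
       \sum_(i : E) (g x - gi i x) <= g x).

From mathcomp Require Import all_boot all_order all_algebra.
Import Order.TTheory GRing.Theory Num.Theory.
Local Open Scope ring_scope.

(* Every linear form w |-> <b_i, w_S> with S in F has nonnegative coefficients
   bounded by L, so it is monotone and L-Lipschitz for the l1 norm, and both
   properties pass to the maximum f.  For self-bounding, let <b_i, x_S> attain
   f(x) and let x^(k) be x with coordinate k set to 0.  Then
   0 <= f(x) - f(x^(k)) <= L x_k <= tau L, and
   sum_k (f(x) - f(x^(k))) <= sum_k <b_i, (x - x^(k))_S> = <b_i, x_S> = f(x). *)

Lemma bigmax0_eq0_or_attained {R : realDomainType} {I : finType} (P : pred I)
    (G : I -> R) :
  \big[Num.max/0]_(i | P i) G i = 0 \/
  exists2 i, P i & \big[Num.max/0]_(k | P k) G k = G i.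
Proof.
apply: (big_ind (fun x => x = 0 \/ exists2 i, P i & x = G i)).
- by left.
- by move=> x y hx hy; case: leP.
- by move=> i Pi; right; exists i.
Qed.

Section InnerRestr.
Context {R : realFieldType} {E : finType}.
Implicit Types (bi u v x : E -> R) (S : {set E}).

Definition drop_coord (k : E) x : E -> R := fun j => if j == k then 0 else x j.

Lemma drop_coord_eq k x y :
  (forall j, j != k -> x j = y j) -> drop_coord k x =1 drop_coord k y.
Proof. by move=> xy j; rewrite /drop_coord; case: eqP => // /eqP /xy. Qed.

Lemma inner_restrB bi S u v :
  inner_restr bi S u - inner_restr bi S v = inner_restr bi S (fun j => u j - v j).
Proof. by rewrite /inner_restr -sumrB; apply: eq_bigr => j _; rewrite mulrBr. Qed.

Lemma ler_inner_restr bi S u v : (forall j, 0 <= bi j) -> (forall j, v j <= u j) ->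
  inner_restr bi S v <= inner_restr bi S u.
Proof. by move=> bi0 vu; apply: ler_sum => j _; rewrite ler_wpM2l. Qed.

Lemma inner_restr_lipschitz bi S u v (c : R) : 0 <= c ->
    (forall j, j \in S -> `|bi j| <= c) ->
  `|inner_restr bi S u - inner_restr bi S v| <= c * \sum_j `|u j - v j|.
Proof.
move=> c0 bic; rewrite inner_restrB /inner_restr.
apply: (le_trans (ler_norm_sum _ _ _)).
apply: (@le_trans _ _ (\sum_(j in S) c * `|u j - v j|)).
  by apply: ler_sum => j jS; rewrite normrM ler_wpM2r ?bic.
rewrite -mulr_sumr ler_wpM2l // [leRHS](bigID (mem S)) /= lerDl.
exact: sumr_ge0.
Qed.

Lemma sum_inner_restr_drop_coord bi S x :
  \sum_k (inner_restr bi S x - inner_restr bi S (drop_coord k x)) = inner_restr bi S x.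
Proof.
under eq_bigr => k _ do rewrite inner_restrB.
rewrite /inner_restr exchange_big /=; apply: eq_bigr => j _.
rewrite -mulr_sumr (bigD1 j) //= big1 => [|k /negbTE kj]; rewrite /drop_coord.
  by rewrite eqxx subr0 addr0.
by rewrite eq_sym kj subrr.
Qed.

Lemma sum_dist_drop_coord k x : \sum_j `|x j - drop_coord k x j| = `|x k|.
Proof.
rewrite (bigD1 k) //= big1 => [|j /negbTE jk]; rewrite /drop_coord.
  by rewrite eqxx subr0 addr0.
by rewrite jk subrr normr0.
Qed.

Section Fmax.
Context {l : nat} {F : {set {set E}}} {b : 'I_l -> E -> R}.
Hypothesis b_ge0 : forall i j, 0 <= b i j.

Local Notation f := (fmax F b).
Local Notation L := (Lconst F b).

Lemma fmax_ge0 w : 0 <= f w.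
Proof. exact: bigmax_ge_id. Qed.

Lemma Lconst_ge0 : 0 <= L.
Proof. exact: bigmax_ge_id. Qed.

Lemma eq_fmax u v : u =1 v -> f u = f v.
Proof.
move=> uv; apply: eq_bigr => S _; apply: eq_bigr => i _.
by apply: eq_bigr => j _; rewrite uv.
Qed.

Lemma inner_restr_le_fmax S i w : S \in F -> inner_restr (b i) S w <= f w.
Proof. by move=> SF; apply: bigmax_sup SF _; apply: le_bigmax. Qed.

Lemma fmax_le w c : 0 <= c ->
  (forall S i, S \in F -> inner_restr (b i) S w <= c) -> f w <= c.
Proof.
move=> c0 le_c; apply: bigmax_le => // S SF.
by apply: bigmax_le => // i _; apply: le_c.
Qed.

Lemma fmax_eq0_or_attained w :
  f w = 0 \/ exists2 S, S \in F & exists i, f w = inner_restr (b i) S w.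
Proof.
have [|[S SF]] := bigmax0_eq0_or_attained (mem F)
  (fun S => \big[Num.max/0]_(i < l) inner_restr (b i) S w); first by left.
have [fS0|[i _ fSi]] := bigmax0_eq0_or_attained xpredT (fun i => inner_restr (b i) S w).
  by rewrite /fmax fS0; left.
by rewrite /fmax fSi => ->; right; exists S => //; exists i.
Qed.

Lemma coef_le_Lconst S i j : S \in F -> j \in S -> b i j <= L.
Proof.
move=> SF jS; apply: bigmax_sup SF _; apply: (bigmax_sup i) => //.
by apply: (bigmax_sup j) => //; rewrite jS mulr1.
Qed.

Lemma fmax_le_l1 u v : f u <= f v + L * \sum_j `|u j - v j|.
Proof.
apply: fmax_le => [|S i SF].
  by rewrite addr_ge0 ?fmax_ge0 // mulr_ge0 ?Lconst_ge0 // sumr_ge0.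
have bL j : j \in S -> `|b i j| <= L by rewrite ger0_norm //; apply: coef_le_Lconst.
have /ler_distlDr := inner_restr_lipschitz (b i) S u v L Lconst_ge0 bL.
by move/le_trans; apply; rewrite lerD2r inner_restr_le_fmax.
Qed.

Lemma fmax_lipschitz u v : `|f u - f v| <= L * \sum_j `|u j - v j|.
Proof.
rewrite ler_norml lerBlDr [_ + f v]addrC fmax_le_l1 andbT lerNl opprB lerBlDr.
by rewrite addrC; under eq_bigr => j _ do rewrite distrC; apply: fmax_le_l1.
Qed.

Lemma le_fmax u v : (forall j, v j <= u j) -> f v <= f u.
Proof.
move=> vu; apply: fmax_le => [|S i SF]; first exact: fmax_ge0.
apply: le_trans (inner_restr_le_fmax S i u SF).
exact: ler_inner_restr (b_ge0 i) vu.
Qed.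

Lemma fmax_drop_coord_bounds k x : (forall j, 0 <= x j) ->
  0 <= f x - f (drop_coord k x) <= L * x k.
Proof.
move=> x0; rewrite subr_ge0 lerBlDl le_fmax => [|j]; last first.
  by rewrite /drop_coord; case: eqP.
by rewrite -(ger0_norm (x0 k)) -(sum_dist_drop_coord k) fmax_le_l1.
Qed.

Lemma sum_fmax_drop_coord_le x : (forall j, 0 <= x j) ->
  \sum_k (f x - f (drop_coord k x)) <= f x.
Proof.
move=> x0; have [fx0|[S SF [i fxi]]] := fmax_eq0_or_attained x.
  by rewrite fx0; apply: sumr_le0 => k _; rewrite sub0r oppr_le0 fmax_ge0.
rewrite [leRHS]fxi -(sum_inner_restr_drop_coord (b i) S x) fxi.
by apply: ler_sum => k _; rewrite lerB ?inner_restr_le_fmax.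
Qed.

End Fmax.
End InnerRestr.

Lemma self_bounding_div {R : realFieldType} {E : finType} {D : E -> R -> bool}
    {g : (E -> R) -> R} (gi : E -> (E -> R) -> R) (c : R) :
  0 < c ->
  (forall i x y, (forall j, j != i -> x j = y j) -> gi i x = gi i y) ->
  (forall x, (forall j, D j (x j)) ->
     (forall i, 0 <= g x - gi i x <= c) /\ \sum_i (g x - gi i x) <= g x) ->
  self_bounding D (fun x => g x / c).
Proof.
move=> c0 gi_local g_bounds; exists (fun i x => gi i x / c); split.
  by move=> i x y /gi_local ->.
move=> x /g_bounds [gi_diff g_sum]; split.
  move=> i; have /andP[diff_ge0 diff_le] := gi_diff i.
  by rewrite -mulrBl divr_ge0 ?(ltW c0) // ler_pdivrMr // mul1r.
under eq_bigr do rewrite -mulrBl.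
by rewrite -mulr_suml ler_pM2r ?invr_gt0.
Qed.

Theorem proposition5 (R : realFieldType) (E : finType) (F : {set {set E}})
  (l : nat) (b : 'I_l -> E -> R) :
  downward_closed F ->
  (forall i j, 0 <= b i j) ->
  0 < Lconst F b ->
  [/\ (* (1) L-Lipschitz w.r.t. the l1 norm on R_{>=0}^E *)
      (forall u v : E -> R, (forall j, 0 <= u j) -> (forall j, 0 <= v j) ->
         `|fmax F b u - fmax F b v| <= Lconst F b * \sum_(j : E) `|u j - v j|),
      (* (2) monotone *)
      (forall u v : E -> R, (forall j, 0 <= v j) -> (forall j, v j <= u j) ->
         fmax F b v <= fmax F b u)
    & (* (3) f/(tau L) on [0,tau]^E is self-bounding *)
      (forall tau : R, 0 < tau ->
         self_bounding (fun (_ : E) (t : R) => (0 <= t) && (t <= tau))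
           (fun x => fmax F b x / (tau * Lconst F b)))].
Proof.
move=> _ b_ge0 L_gt0; split=> [u v _ _|u v _|tau tau_gt0].
- exact: fmax_lipschitz.
- exact: le_fmax.
apply: (self_bounding_div (fun k x => fmax F b (drop_coord k x))).
- by rewrite mulr_gt0.
- by move=> k x y /drop_coord_eq /eq_fmax.
move=> x x_box; have x_ge0 j : 0 <= x j by case/andP: (x_box j).
split; last exact: sum_fmax_drop_coord_le.
move=> k; have /andP[-> le_Lx] := fmax_drop_coord_bounds (F := F) b_ge0 k x x_ge0.
by rewrite (le_trans le_Lx) // mulrC ler_wpM2r ?(ltW L_gt0) //; case/andP: (x_box k).
Qed.
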